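(* Let $A\in\mathbb{C}^{n\times n}$ and let $\bar{A}$ denote its entrywise complex conjugate. Then $A$ is G-Hamiltonian if and only if $A$ is similar to $-\bar{A}$, i.e. there exists an invertible $Q\in\mathbb{C}^{n\times n}$ with $Q^{-1}AQ=-\bar{A}$.
   Context: A matrix $A\in\mathbb{C}^{n\times n}$ is called G-Hamiltonian if there exist a non-singular Hermitian matrix $G\in\mathbb{C}^{n\times n}$ and a Hermitian matrix $S\in\mathbb{C}^{n\times n}$ such that $A=iG^{-1}S$. *)

From mathcomp Require Import all_boot all_algebra.
From mathcomp Require Import complex reals.
Set Implicit Arguments. Unset Strict Implicit. Unset Printing Implicit Defensive.
Import GRing.Theory Num.Theory.
Local Open Scope ring_scope.

(* Complex numbers are modelled as R[i] = complex R for R : realType (i.e. C). *)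

Definition entry_conj {R : realType} {m n : nat} (A : 'M[R[i]]_(m, n)) : 'M[R[i]]_(m, n) :=
  map_mx (fun z => z^*) A.

Definition adjmx {R : realType} {m n : nat} (A : 'M[R[i]]_(m, n)) : 'M[R[i]]_(n, m) :=
  (entry_conj A)^T.

Definition hermitian {R : realType} {n : nat} (H : 'M[R[i]]_n) : Prop :=
  adjmx H = H.

Definition G_Hamiltonian {R : realType} {n : nat} (A : 'M[R[i]]_n) : Prop :=
  exists G S : 'M[R[i]]_n,
    [/\ G \in unitmx, hermitian G, hermitian S & A = 'i *: (invmx G *m S)].

(* A matrix over an algebraically closed field is similar to its transpose.
   Split the space along a coprime factorisation of the characteristic
   polynomial into two nonzero stable subspaces and induct; if no such
   splitting exists, the matrix is a scalar plus a nilpotent N, and one splits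
   off a cyclic subspace spanned by v, vN, ..., vN^(d-1), on which N acts as a
   shift that an invertible Hankel matrix conjugates to its transpose.
   As A^* = (conj A)^T and conj A is similar to its transpose, the theorem
   amounts to: A is G-Hamiltonian iff A is similar to -A^*.  Indeed
   G A = -A^* G is the same as A = i G^-1 S with S = -i G A Hermitian.
   Conversely, if Y A = -A^* Y with Y invertible then also Y^* A = -A^* Y^*,
   so every member of the pencil Y + Y^* + t i (Y^* - Y) intertwines A and
   -A^*; it is Hermitian for real t, equals 2Y at t = i, hence is invertible
   for all but finitely many t. *)

From mathcomp Require Import all_boot all_algebra.
From mathcomp Require Import complex reals.
From mathcomp Require Import zify perm.
Set Implicit Arguments. Unset Strict Implicit. Unset Printing Implicit Defensive.
Import GRing.Theory Num.Theory.
Local Open Scope ring_scope.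

Section Similarity.
Variable F : fieldType.

Definition similar_mx n (A B : 'M[F]_n) :=
  exists2 P : 'M[F]_n, P \in unitmx & P *m A = B *m P.

Lemma similar_mxP n (A B : 'M[F]_n) :
  similar_mx A B <-> exists Q, Q \in unitmx /\ invmx Q *m A *m Q = B.
Proof.
split=> [[P Pu PA] | [Q [Qu QAQ]]].
  by exists (invmx P); rewrite unitmx_inv invmxK PA mulmxK.
by exists (invmx Q); rewrite ?unitmx_inv // -QAQ mulmxK.
Qed.

Lemma similar_mx_refl n (A : 'M[F]_n) : similar_mx A A.
Proof. by exists 1%:M; rewrite ?unitmx1 // mul1mx mulmx1. Qed.

Lemma similar_mx_sym n (A B : 'M[F]_n) : similar_mx A B -> similar_mx B A.
Proof.
case=> P Pu PA; exists (invmx P); rewrite ?unitmx_inv //.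
by rewrite -[A](mulKmx Pu) PA -mulmxA mulmxK.
Qed.

Lemma similar_mx_trans n (A B C : 'M[F]_n) :
  similar_mx A B -> similar_mx B C -> similar_mx A C.
Proof.
case=> P Pu PA [Q Qu QB]; exists (Q *m P); first by rewrite unitmx_mul Qu Pu.
by rewrite -mulmxA PA !mulmxA QB.
Qed.

Lemma similar_mxN n (A B : 'M[F]_n) : similar_mx A B -> similar_mx (- A) (- B).
Proof. by case=> P Pu PA; exists P; rewrite // mulmxN PA mulNmx. Qed.

Lemma similar_mx_tr n (A B : 'M[F]_n) : similar_mx A B -> similar_mx A^T B^T.
Proof.
case=> P Pu PA; apply: similar_mx_sym.
by exists P^T; rewrite ?unitmx_tr // -!trmx_mul PA.
Qed.

Lemma similar_mxD_scalar n (A B : 'M[F]_n) a :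
  similar_mx A B -> similar_mx (A + a%:M) (B + a%:M).
Proof. by case=> P Pu PA; exists P; rewrite // mulmxDr mulmxDl PA scalar_mxC. Qed.

Lemma similar_mx_block r s (A1 B1 : 'M[F]_r) (A2 B2 : 'M[F]_s) :
  similar_mx A1 B1 -> similar_mx A2 B2 ->
  similar_mx (block_mx A1 0 0 A2) (block_mx B1 0 0 B2).
Proof.
case=> P1 P1u P1A [P2 P2u P2A]; exists (block_mx P1 0 0 P2).
  by rewrite unitmxE det_ublock unitrM -!unitmxE P1u P2u.
by rewrite !mulmx_block !mulmx0 !mul0mx !addr0 !add0r P1A P2A.
Qed.

Lemma unitmx_col_mx r s (U : 'M[F]_(r, r + s)) (U' : 'M[F]_(s, r + s)) :
  row_free U -> row_free U' -> (U :&: U')%MS = 0 -> col_mx U U' \in unitmx.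
Proof.
move=> /eqP rU /eqP rU' capUU'.
rewrite -row_free_unit /row_free -addsmxE.
by have := mxrank_sum_cap U U'; rewrite capUU' mxrank0 addn0 rU rU' => ->.
Qed.

Lemma similar_mx_col_mx r s (A : 'M[F]_(r + s)) U U' A1 A2 :
  col_mx U U' \in unitmx -> U *m A = A1 *m U -> U' *m A = A2 *m U' ->
  similar_mx A (block_mx A1 0 0 A2).
Proof.
move=> Vu UA U'A; exists (col_mx U U') => //.
by rewrite mul_col_mx mul_block_col !mul0mx addr0 add0r UA U'A.
Qed.

Lemma similar_trmx_direct_sum n r s (A : 'M[F]_n) (U : 'M_(r, n)) (U' : 'M_(s, n))
    A1 A2 :
  (r + s = n)%N -> (U :&: U')%MS = 0 -> row_free U -> row_free U' ->
  U *m A = A1 *m U -> U' *m A = A2 *m U' ->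
  similar_mx A1 A1^T -> similar_mx A2 A2^T -> similar_mx A A^T.
Proof.
move=> rsn; subst n => capUU' fU fU' UA U'A simA1 simA2.
have simA := similar_mx_col_mx (unitmx_col_mx fU fU' capUU') UA U'A.
apply: (similar_mx_trans simA).
apply: similar_mx_trans (similar_mx_sym (similar_mx_tr simA)).
by rewrite tr_block_mx !trmx0; apply: similar_mx_block.
Qed.

End Similarity.

Section Krylov.
Variable F : fieldType.

Definition shiftmx d : 'M[F]_d := \matrix_(i, j) (i.+1 == j)%:R.

Definition krylovmx n d (v : 'rV[F]_n) (N : 'M[F]_n) : 'M[F]_(d, n) :=
  \matrix_(a < d) (v *m N ^+ a).

Lemma krylovmx_nilpotent n d (v : 'rV[F]_n) (N : 'M[F]_n) : N ^+ d = 0 ->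
  krylovmx d v N *m N = shiftmx d *m krylovmx d v N.
Proof.
move=> Nd; apply/row_matrixP => a.
rewrite row_mul rowK -mulmxA mulmxE -exprSr row_mul.
apply/rowP => j; rewrite [RHS]mxE.
have [lt_a1d | le_da1] := ltnP a.+1 d.
  rewrite [RHS](bigD1 (Ordinal lt_a1d)) //= !mxE eqxx mul1r.
  rewrite [X in _ + X]big1 ?addr0 // => k ne_k.
  rewrite !mxE; case: eqP => [ek | _]; last by rewrite mul0r.
  by rewrite -(inj_eq val_inj) /= -ek eqxx in ne_k.
have e_a1d : a.+1 = d by apply/eqP; rewrite eqn_leq le_da1 ltn_ord.
rewrite e_a1d Nd mulmx0 mxE big1 // => k _; rewrite !mxE e_a1d.
by case: eqP => [ek | _]; rewrite ?mul0r //; have := ltn_ord k; rewrite -ek ltnn.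
Qed.

Lemma trmxX n (N : 'M[F]_n) k : (N ^+ k)^T = N^T ^+ k.
Proof.
elim: k => [|k IHk]; first by rewrite !expr0 trmx1.
by rewrite exprS -mulmxE trmx_mul IHk exprSr mulmxE.
Qed.

Lemma hankel_entry n d (v : 'rV[F]_n) (c : 'cV[F]_n) (N : 'M[F]_n) (a b : 'I_d) :
  (krylovmx d v N *m (krylovmx d c^T N^T)^T) a b = (v *m N ^+ (a + b) *m c) 0 0.
Proof.
rewrite [LHS]mxE exprD -mulmxE !mulmxA -[v *m _ *m _ *m c]mulmxA [RHS]mxE.
apply: eq_bigr => k _; rewrite !mxE; congr (_ * _).
by rewrite -trmxX; apply: eq_bigr => i _; rewrite !mxE mulrC.
Qed.

(* Reversing its rows turns the Hankel matrix [(v N^(a+b) c)] into an upper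
   triangular matrix with unit diagonal. *)
Lemma hankel_unitmx n d (v : 'rV[F]_n) (c : 'cV[F]_n) (N : 'M[F]_n) :
  N ^+ d = 0 -> (v *m N ^+ d.-1 *m c) 0 0 = 1 ->
  krylovmx d v N *m (krylovmx d c^T N^T)^T \in unitmx.
Proof.
move=> Nd vNc; set H := _ *m _.
pose s := perm (@rev_ord_inj d).
suff : row_perm s H \in unitmx by rewrite row_permE unitmx_mul => /andP[].
rewrite unitmxE (@det_trig _ _ (row_perm s H)).
  rewrite big1 ?unitr1 // => i _; rewrite mxE permE hankel_entry /=.
  by have -> : (d - i.+1 + i = d.-1)%N by have := ltn_ord i; lia.
apply/is_trig_mxP => i j lt_ij; rewrite mxE permE hankel_entry /=.
have -> : (d - i.+1 + j = d + (j - i.+1))%N by have := ltn_ord i; lia.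
by rewrite exprD Nd mul0r mulmx0 mul0mx mxE.
Qed.

End Krylov.
Arguments shiftmx {F} d.

Section TransposeInduction.
Variables (F : fieldType) (n : nat).
Hypothesis IHn : forall m, (m < n)%N -> forall B : 'M[F]_m, similar_mx B B^T.

Lemma similar_trmx_stable_sum (A V W : 'M[F]_n) :
  stablemx V A -> stablemx W A -> (V :&: W)%MS = 0 -> (V + W :=: 1%:M)%MS ->
  V != 0 -> W != 0 -> similar_mx A A^T.
Proof.
move=> VA WA capVW sumVW V_neq0 W_neq0.
have rVW : (\rank V + \rank W = n)%N.
  by rewrite -mxrank_sum_cap capVW mxrank0 addn0 sumVW mxrank1.
have rV_gt0 : (0 < \rank V)%N by rewrite lt0n mxrank_eq0.
have rW_gt0 : (0 < \rank W)%N by rewrite lt0n mxrank_eq0.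
apply: (similar_trmx_direct_sum (U := row_base V) (U' := row_base W)
  (A1 := restrictmx V A) (A2 := restrictmx W A) rVW).
- apply/eqP; rewrite -submx0 (cap_eqmx (eq_row_base _) (eq_row_base _)) capVW.
  exact: submx_refl.
- exact: row_base_free.
- exact: row_base_free.
- by rewrite /conjmx mulmxKpV // stablemx_row_base.
- by rewrite /conjmx mulmxKpV // stablemx_row_base.
- by apply: IHn; lia.
- by apply: IHn; lia.
Qed.

(* [v N^a] spans an N-stable subspace on which N acts as [shiftmx d], and the
   kernel of [[N^b c]] is a stable complement; the Hankel matrix [K *m L]
   both proves this and conjugates [shiftmx d] to its transpose. *)
Lemma similar_trmx_cyclic (N : 'M[F]_n) d (v : 'rV[F]_n) (c : 'cV[F]_n) :
  (0 < d)%N -> N ^+ d = 0 -> (v *m N ^+ d.-1 *m c) 0 0 = 1 -> similar_mx N N^T.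
Proof.
move=> d_gt0 Nd vNc.
set K := krylovmx d v N; set L := (krylovmx d c^T N^T)^T.
have Hu : K *m L \in unitmx := hankel_unitmx Nd vNc.
have rK : \rank K = d.
  by apply/eqP; rewrite eqn_leq rank_leq_row -{1}(mxrank_unit Hu) mxrankM_maxl.
have rL : \rank L = d.
  by apply/eqP; rewrite eqn_leq rank_leq_col -{1}(mxrank_unit Hu) mxrankM_maxr.
have KN : K *m N = shiftmx d *m K by apply: krylovmx_nilpotent.
have NL : N *m L = L *m (shiftmx d)^T.
  have NTd : N^T ^+ d = 0 by rewrite -trmxX Nd trmx0.
  by have /(congr1 trmx) := krylovmx_nilpotent c^T NTd; rewrite !trmx_mul trmxK.
have kerLN : stablemx (kermx L) N.
  by apply/sub_kermxP; rewrite -mulmxA NL mulmxA mulmx_ker mul0mx.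
have d_le_n : (d <= n)%N by rewrite -rK rank_leq_col.
apply: (similar_trmx_direct_sum (U := K) (U' := row_base (kermx L))
  (A1 := shiftmx d) (A2 := restrictmx (kermx L) N)).
- by rewrite mxrank_ker rL subnKC.
- have /submxP [Y eY] := capmxSl K (row_base (kermx L)).
  have /sub_kermxP : ((K :&: row_base (kermx L)) <= kermx L)%MS.
    by apply: submx_trans (capmxSr _ _) _; rewrite eq_row_base.
  rewrite eY -mulmxA => /(canRL (mulmxK Hu)); rewrite mul0mx => Y0.
  by rewrite Y0 mul0mx.
- by rewrite /row_free rK.
- exact: row_base_free.
- exact: KN.
- by rewrite /conjmx mulmxKpV // stablemx_row_base.
- apply: similar_mx_sym; exists (K *m L) => //.
  by rewrite -mulmxA -NL mulmxA KN -mulmxA.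
- by apply: IHn; rewrite mxrank_ker rL; lia.
Qed.

Lemma similar_trmx_nilpotent (N : 'M[F]_n) m :
  (0 < n)%N -> N ^+ m = 0 -> similar_mx N N^T.
Proof.
move=> n_gt0 Nm; have Nnil : exists d, N ^+ d == 0 by exists m; rewrite Nm.
have [d /eqP Nd d_min] := ex_minnP Nnil.
have d_gt0 : (0 < d)%N.
  case: d Nd {d_min} => // /eqP; rewrite expr0 -mxrank_eq0 mxrank1.
  by rewrite eqn0Ngt n_gt0.
have /matrix0Pn [i [j Nij_neq0]] : N ^+ d.-1 != 0.
  by apply/negP => /d_min; rewrite leqNgt ltn_predL d_gt0.
apply: (@similar_trmx_cyclic N d (delta_mx 0 i)
  (((N ^+ d.-1) i j)^-1 *: delta_mx j 0) d_gt0 Nd).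
by rewrite -rowE -scalemxAr -colE !mxE mulVf.
Qed.

End TransposeInduction.

Lemma similar_mx_trmx (F : closedFieldType) n (A : 'M[F]_n) : similar_mx A A^T.
Proof.
elim/ltn_ind: n A => -[|n] IHn A.
  by rewrite [A^T]thinmx0 [A]thinmx0; apply: similar_mx_refl.
have [l charAl] : exists l, root (char_poly A) l.
  by apply/closed_rootP; rewrite size_char_poly.
have [mu [q]] := multiplicity_XsubC (char_poly A) l.
rewrite monic_neq0 ?char_poly_monic //= => ql_neq0 charAE.
set p := ('X - l%:P) ^+ mu.
have cop : coprimep p q.
  by apply: coprimep_expl; rewrite coprimep_sym coprimep_XsubC.
have sum_full : (kermxpoly A p + kermxpoly A q :=: 1%:M)%MS.
  apply: eqmx_trans (eqmx_sym (kermxpolyM A cop)) _.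
  by apply: kermxpoly_min; rewrite mulrC -charAE mxminpoly_dvd_char.
have kerpE : kermxpoly A p = kermx ((A - l%:M) ^+ mu).
  by rewrite /kermxpoly rmorphXn /= rmorphB /= horner_mx_X horner_mx_C.
have [kerq0 | kerq_neq0] := eqVneq (kermxpoly A q) 0.
  have Anil : (A - l%:M) ^+ mu = 0.
    have : (1%:M <= kermxpoly A p + kermxpoly A q)%MS by rewrite sum_full.
    by rewrite kerq0 addsmx0 kerpE => /sub_kermxP; rewrite mul1mx.
  have := similar_mxD_scalar l (similar_trmx_nilpotent IHn (ltn0Sn n) Anil).
  by rewrite linearB /= tr_scalar_mx !subrK.
have kerp_neq0 : kermxpoly A p != 0.
  have /eigenvalueP [v vA v_neq0] : eigenvalue A l by rewrite eigenvalue_root_char.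
  have [mu' mu_eq] : exists mu', mu = mu'.+1.
    case: mu charAE {p cop sum_full kerpE} => [|mu'] charAE; last by exists mu'.
    by move: charAl ql_neq0; rewrite charAE expr0 mulr1 => ->.
  apply/rowV0Pn; exists v => //; rewrite kerpE mu_eq; apply/sub_kermxP.
  by rewrite exprS -mulmxE mulmxA mulmxBr vA mul_mx_scalar subrr mul0mx.
apply: (similar_trmx_stable_sum IHn _ _ (mxdirect_kermxpoly A cop) sum_full) => //;
  exact: comm_mx_stable_kermxpoly.
Qed.

Lemma pencil_unitmx_nat (F : numFieldType) n (H1 H2 : 'M[F]_n) x :
  H1 + x *: H2 \in unitmx -> exists k : nat, H1 + k%:R *: H2 \in unitmx.
Proof.
move=> Hx_unit.
pose p := \det (map_mx polyC H1 + 'X *: map_mx polyC H2).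
have pE y : (H1 + y *: H2 \in unitmx) = (p.[y] != 0).
  have horner_evalC : horner_eval y \o polyC =1 id := fun=> hornerC _ _.
  rewrite /p -horner_evalE -det_map_mx map_mxD map_mxZ /= horner_evalE hornerX.
  by rewrite -!map_mx_comp !map_mx_id // unitmxE unitfE.
have p_neq0 : p != 0.
  by move: Hx_unit; rewrite pE; apply: contra_neq => ->; rewrite horner0.
have nats_uniq : uniq [seq (k%:R : F) | k <- iota 0 (size p)].
  by rewrite map_inj_uniq ?iota_uniq //; apply: mulrIn; rewrite oner_eq0.
have := contraNN (fun all_roots => max_poly_roots p_neq0 all_roots nats_uniq).
rewrite size_map size_iota ltnn => /(_ isT) /allPn [_ /mapP [k _ ->]] p_k_neq0.
by exists k; rewrite pE -rootE.
Qed.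

Section Adjoint.
Variable R : realType.

Lemma adjmx_mul m n p (A : 'M[R[i]]_(m, n)) (B : 'M[R[i]]_(n, p)) :
  adjmx (A *m B) = adjmx B *m adjmx A.
Proof. by rewrite /adjmx /entry_conj map_mxM trmx_mul. Qed.

Lemma adjmxZ m n a (A : 'M[R[i]]_(m, n)) : adjmx (a *: A) = a^* *: adjmx A.
Proof. by rewrite /adjmx /entry_conj map_mxZ linearZ. Qed.

Lemma adjmxD m n (A B : 'M[R[i]]_(m, n)) : adjmx (A + B) = adjmx A + adjmx B.
Proof. by rewrite /adjmx /entry_conj map_mxD linearD. Qed.

Lemma adjmxN m n (A : 'M[R[i]]_(m, n)) : adjmx (- A) = - adjmx A.
Proof. by rewrite /adjmx /entry_conj map_mxN linearN. Qed.

Lemma adjmxK m n (A : 'M[R[i]]_(m, n)) : adjmx (adjmx A) = A.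
Proof. by apply/matrixP => i j; rewrite !mxE conjCK. Qed.

Lemma adjmx_inv n (A : 'M[R[i]]_n) : adjmx (invmx A) = invmx (adjmx A).
Proof. by rewrite /adjmx /entry_conj map_invmx trmx_inv. Qed.

End Adjoint.

Section GHamiltonian.
Variables (R : realType) (n : nat) (A : 'M[R[i]]_n).

Lemma adjmx_intertwine (Y : 'M[R[i]]_n) :
  Y *m A = - adjmx A *m Y -> adjmx Y *m A = - adjmx A *m adjmx Y.
Proof.
move=> /(congr1 adjmx); rewrite !adjmx_mul adjmxN adjmxK mulmxN mulNmx => e.
by rewrite e opprK.
Qed.

Lemma hermitian_intertwiner :
  similar_mx A (- adjmx A) ->
  exists G, [/\ G \in unitmx, hermitian G & G *m A = - adjmx A *m G].
Proof.
case=> Y Yu YA; have YA' := adjmx_intertwine YA.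
pose G t := Y + adjmx Y + t *: ('i *: (adjmx Y - Y)).
have GA t : G t *m A = - adjmx A *m G t.
  by rewrite !mulmxDl -!scalemxAl mulmxBl YA YA' !mulmxDr -!scalemxAr mulmxBr.
have [k Gk_unit] : exists k : nat, G k%:R \in unitmx.
  apply: (@pencil_unitmx_nat _ _ _ _ 'i).
  have -> : Y + adjmx Y + 'i *: ('i *: (adjmx Y - Y)) = 2%:R *: Y.
    rewrite scalerA -expr2 sqrCi scaleN1r opprB addrACA subrr addr0.
    by rewrite -mulr2n scaler_nat.
  by rewrite unitmxZ // unitfE pnatr_eq0.
exists (G k%:R); split => //.
rewrite /hermitian /G !adjmxD !adjmxZ adjmxD adjmxN adjmxK conjCi conjC_nat.
by rewrite [adjmx Y + Y]addrC scaleNr -scalerN opprB.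
Qed.

Lemma G_HamiltonianP : G_Hamiltonian A <-> similar_mx A (- adjmx A).
Proof.
split=> [[G [S [Gu hG hS ->]]] | /hermitian_intertwiner [G [Gu hG GA]]].
  exists G => //; rewrite adjmxZ adjmx_mul adjmx_inv hG hS conjCi.
  rewrite -scalemxAr mulmxA mulmxV // mul1mx scaleNr opprK -scalemxAl.
  by rewrite -mulmxA mulVmx // mulmx1.
exists G, (- 'i *: (G *m A)); split => //.
  rewrite /hermitian adjmxZ adjmx_mul hG rmorphN /= conjCi opprK.
  by rewrite -[adjmx A *m G]opprK -mulNmx -GA scalerN scaleNr.
rewrite -scalemxAr scalerA mulmxA mulVmx // mul1mx mulrN -expr2 sqrCi opprK.
by rewrite scale1r.
Qed.

End GHamiltonian.

Theorem theorem1 (R : realType) (n : nat) (A : 'M[R[i]]_n) :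
  G_Hamiltonian A <->
  exists Q : 'M[R[i]]_n, Q \in unitmx /\ invmx Q *m A *m Q = - entry_conj A.
Proof.
split=> [/G_HamiltonianP simA | /similar_mxP simA].
  apply/similar_mxP; apply: (similar_mx_trans simA).
  exact/similar_mxN/similar_mx_sym/similar_mx_trmx.
apply/G_HamiltonianP; apply: (similar_mx_trans simA).
exact/similar_mxN/similar_mx_trmx.
Qed.
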